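(* Let $T$ be a compact metric space, let $\eta$ be a sample-continuous max-infinitely divisible process on $T$ with vertex function identically $0$ and exponent measure $\mu$, and $\Phi$ a Poisson random measure on $\mathbb{C}_0$ with intensity $\mu$ with $\eta=\max(\Phi)$. Let $K\subset T$ be closed. Then the $K$-extremal point measure $\Phi_K^+$ is the unique sub-point measure $\tilde\Phi$ of $\Phi$ such that $$\tilde\Phi\in C_K^+\quad\text{and}\quad\Phi-\tilde\Phi\in C_K^-(\max(\tilde\Phi)).$$
   Context: $\mathbb{C}_0$ is the set of continuous $f:T\to[0,\infty)$ not identically zero (sup norm). $M_p(\mathbb{C}_0)$ is the set of point measures $M=\sum_{i\in I}\delta_{f_i}$ on $\mathbb{C}_0$ with $\{i:\|f_i\|>\varepsilon\}$ finite for all $\varepsilon>0$; $[M]$ is its set of atoms and $\max(M)(s)=\max\{f(s):f\in[M]\}$ ($0$ if $M=0$). $M_1$ is a sub-point measure of $M_2$ if $M_2-M_1\in M_p(\mathbb{C}_0)$. The vertex function is $h(t)=\sup\{x:\mathbb P(\eta(t)\ge x)=1\}$; the exponent measure $\mu$ is a Borel measure on $\mathbb{C}_0$ with $\mu(\{\|f\|>\varepsilon\})<\infty$ for all $\varepsilon>0$ and $\mathbb P[\eta(K_i)<x_i,i\le n]=\exp[-\mu(\cup_i\{f(K_i)\ge x_i\})]$. For $f,g$ on $K$: $f<_Kg$ iff $f(s)<g(s)$ for all $s\in K$; $f\not<_Kg$ otherwise. $\Phi_K^+$ is the restriction of $\Phi$ to its atoms $\phi$ with $\phi\not<_K\eta$.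 $C_K^+=\{M:\forall f\in[M],\ f\not<_K\max(M)\}$ and $C_K^-(g)=\{M:\forall f\in[M],\ f<_Kg\}$. *)

From mathcomp Require Import all_boot all_order all_algebra.
From mathcomp Require Import all_classical all_reals all_analysis measurable_realfun.
Import Order.TTheory GRing.Theory Num.Theory numFieldNormedType.Exports.

Set Implicit Arguments.
Unset Strict Implicit.
Unset Printing Implicit Defensive.

Local Open Scope classical_set_scope.
Local Open Scope ring_scope.

Section MaxID.
Context {R : realType} {T : pseudoMetricType R}.

Definition C0 : set (T -> R) :=
  [set f : T -> R | continuous f /\ (forall t, 0 <= f t) /\ exists t, f t != 0].

Definition supnorm_gt (f : T -> R) (e : R) : Prop := exists t, e < `|f t|.

Definition supdist_lt (f g : T -> R) (e : R) : Prop :=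
  exists2 r, r < e & forall t, `|f t - g t| <= r.

(* A point measure sum_i delta_{f_i} is represented by its multiplicity
   function m : (T -> R) -> nat (m f = number of indices i with f_i = f). *)
Definition atoms (m : (T -> R) -> nat) : set (T -> R) := [set f | (0 < m f)%N].

Definition pointmeasure (m : (T -> R) -> nat) : Prop :=
  atoms m `<=` C0 /\
  forall e, 0 < e -> finite_set [set f | atoms m f /\ supnorm_gt f e].

Definition maxPM (m : (T -> R) -> nat) (s : T) : R :=
  sup ([set f s | f in atoms m] `|` [set 0]).

Definition subPM (m1 m2 : (T -> R) -> nat) : Prop :=
  pointmeasure m1 /\ (forall f, m1 f <= m2 f)%N /\
  pointmeasure (fun f => m2 f - m1 f)%N.

Definition ltK (K : set T) (f g : T -> R) : Prop := forall s, K s -> f s < g s.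

Definition extremalK (K : set T) (eta : T -> R) (m : (T -> R) -> nat) :
  (T -> R) -> nat :=
  fun f => if `[< ~ ltK K f eta >] then m f else 0%N.

Definition CKplus (K : set T) (m : (T -> R) -> nat) : Prop :=
  pointmeasure m /\ forall f, atoms m f -> ~ ltK K f (maxPM m).

Definition CKminus (K : set T) (g : T -> R) (m : (T -> R) -> nat) : Prop :=
  pointmeasure m /\ forall f, atoms m f -> ltK K f g.

Definition C0_open (A : set (T -> R)) : Prop :=
  A `<=` C0 /\
  forall f, A f -> exists2 e, 0 < e & forall g, C0 g -> supdist_lt f g e -> A g.

Definition C0_borel : set (set (T -> R)) := <<s C0, C0_open >>.

(* f(K) = sup_{s in K} f(s)  (-oo if K is empty) *)
Definition supK (f : T -> R) (K : set T) : \bar R :=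
  ereal_sup ((fun s => (f s)%:E) @` K).

Context {d : measure_display} {Omega : measurableType d}.

Definition vertex (P : probability Omega R) (eta : Omega -> T -> R) (t : T)
  : \bar R :=
  ereal_sup [set x%:E | x in [set x | P [set w | x <= eta w t] = 1%E]].

(* max-infinite divisibility: for every n >= 1, eta has the same finite
   dimensional distributions as the pointwise maximum of n i.i.d. processes *)
Definition max_inf_div (P : probability Omega R) (eta : Omega -> T -> R) : Prop :=
  forall n : nat, (0 < n)%N ->
  exists (d' : measure_display) (O' : measurableType d') (P' : probability O' R)
         (zeta : 'I_n -> O' -> T -> R),
    (forall i t, measurable_fun setT (fun w => zeta i w t)) /\
    (forall (k : nat) (ts : 'I_k -> T) (x : 'I_n -> 'I_k -> R),
       P' (\bigcap_(i in [set: 'I_n]) [set w | forall j, zeta i w (ts j) <= x i j])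
       = (\prod_(i < n) P' [set w | forall j, (zeta i w (ts j) <= x i j)%R])%E) /\
    (forall (k : nat) (ts : 'I_k -> T) (x : 'I_k -> R) (i i' : 'I_n),
       P' [set w | forall j, zeta i w (ts j) <= x j]
       = P' [set w | forall j, zeta i' w (ts j) <= x j]) /\
    (forall (k : nat) (ts : 'I_k -> T) (x : 'I_k -> R),
       P [set w | forall j, eta w (ts j) <= x j]
       = P' [set w | forall j, forall i, zeta i w (ts j) <= x j]).

Definition C0_measure (mu : set (T -> R) -> \bar R) : Prop :=
  mu set0 = 0%E /\ (forall A, C0_borel A -> (0 <= mu A)%E) /\
  forall F : nat -> set (T -> R), (forall n, C0_borel (F n)) -> trivIset setT F ->
    (fun n => (\sum_(0 <= i < n) mu (F i))%E) @ \oo --> mu (\bigcup_n F n).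

Definition exponent_measure (P : probability Omega R) (eta : Omega -> T -> R)
  (mu : set (T -> R) -> \bar R) : Prop :=
  C0_measure mu /\
  (forall e, 0 < e -> (mu (C0 `&` [set f | supnorm_gt f e]) < +oo)%E) /\
  forall (n : nat) (K : 'I_n -> set T) (x : 'I_n -> R),
    (forall i, closed (K i)) -> (forall i, 0 < x i) ->
    P (\bigcap_(i in [set: 'I_n]) [set w | (supK (eta w) (K i) < (x i)%:E)%E])
    = (expR (- fine (mu (C0 `&` \bigcup_(i in [set: 'I_n])
                                   [set f | ((x i)%:E <= supK f (K i))%E]))))%:E.

Definition pm_count (Phi : Omega -> (T -> R) -> nat) (A : set (T -> R)) (w : Omega)
  : \bar R := \esum_(f in A) ((Phi w f)%:R)%:E.

Definition poisson_rm (P : probability Omega R) (Phi : Omega -> (T -> R) -> nat)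
  (mu : set (T -> R) -> \bar R) : Prop :=
  (forall w, pointmeasure (Phi w)) /\
  (forall A, C0_borel A -> measurable_fun setT (fun w => pm_count Phi A w : \bar R)) /\
  forall (n : nat) (A : 'I_n -> set (T -> R)) (k : 'I_n -> nat),
    (forall i, C0_borel (A i)) -> (forall i, (mu (A i) < +oo)%E) ->
    trivIset setT A ->
    P (\bigcap_(i in [set: 'I_n]) [set w | pm_count Phi (A i) w = ((k i)%:R)%:E])
    = (\prod_(i < n)
         (expR (- fine (mu (A i))) * fine (mu (A i)) ^+ k i / ((k i)`!)%:R)%:E)%E.

End MaxID.

From mathcomp Require Import all_boot all_order all_algebra.
From mathcomp Require Import all_classical all_reals all_analysis measurable_realfun.
Import Order.TTheory GRing.Theory Num.Theory numFieldNormedType.Exports.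
Local Open Scope classical_set_scope.
Local Open Scope ring_scope.
Set Implicit Arguments.
Unset Strict Implicit.

(* The statement is pathwise: only the fact that Phi(w) is a point measure is
   used.  If Phit satisfies the two conditions, every atom of Phi - Phit lies
   strictly below max(Phit) on K, so max(Phit) = max(Phi) = eta on K; hence the
   atoms of Phit are exactly the atoms of Phi that are not <_K eta.
   Conversely, for Phit = Phi_K^+ the key point is that max(Phi_K^+) = eta on K:
   since only finitely many atoms exceed any positive level, a positive value
   eta(s) is attained by some atom f with f(s) = eta(s), and such an f is not
   <_K eta. *)

Lemma finite_set_max (R : realType) (A : set R) x0 : finite_set A -> A x0 ->
  exists2 x, A x & ubound A x.
Proof.
move=> /finite_seqP[s ->] sx0; exists (\big[Order.max/x0]_(y <- s) y).
  rewrite big_seq; elim/big_ind: _ => // a b sa sb.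
  by rewrite /Order.max; case: ifP.
by move=> y sy; apply: le_bigmax_seq.
Qed.

Section point_measure_max.
Context {R : realType} {T : pseudoMetricType R}.
Implicit Types (m : (T -> R) -> nat) (f g : T -> R) (s : T).

Lemma ltK_eq (K : set T) f g h :
  (forall s, K s -> g s = h s) -> ltK K f g <-> ltK K f h.
Proof. by move=> gh; split=> fK s Ks; [rewrite -gh | rewrite gh] => //; apply: fK. Qed.

Definition atom_values m s : set R := [set f s | f in atoms m] `|` [set 0].

Lemma pointmeasureS m m' : pointmeasure m -> atoms m' `<=` atoms m ->
  pointmeasure m'.
Proof.
move=> [mC0 mfin] sub; split=> [f /sub/mC0 //|e e0].
by apply: sub_finite_set (mfin e e0) => f [/sub mf ef].
Qed.

(* The level e > 0 splits the atom values into finitely many values above e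
   and values bounded by e. *)
Lemma atom_values_bounded m s e : pointmeasure m -> 0 < e ->
  exists2 x, ubound (atom_values m s) x &
    x = e \/ exists2 g, atoms m g & g s = x.
Proof.
move=> [_ mfin] e0.
pose top := [set g s | g in [set g | atoms m g /\ e < g s]] `|` [set e].
have top_fin : finite_set top.
  rewrite finite_setU; split; last exact: finite_set1.
  apply/finite_image/(sub_finite_set _ (mfin e e0)) => g [mg egs].
  by split=> //; exists s; apply: lt_le_trans egs (ler_norm _).
have [x topx xub] := @finite_set_max _ top e top_fin (or_intror erefl).
have ex : e <= x by apply: xub; right.
exists x; last by case: topx => [[g [mg _] <-] | ->]; [right; exists g | left].
move=> y [[g mg <-] | ->]; last exact: le_trans (ltW e0) ex.
have [egs | gse] := ltP e (g s); first by apply: xub; left; exists g.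
exact: le_trans gse ex.
Qed.

Lemma atom_values_has_sup m s : pointmeasure m -> has_sup (atom_values m s).
Proof.
move=> pm; split; first by exists 0; right.
by have [x xub _] := atom_values_bounded s pm ltr01; exists x.
Qed.

Lemma maxPM_ub m s g : pointmeasure m -> atoms m g -> g s <= maxPM m s.
Proof.
move=> pm mg; apply: sup_upper_bound (atom_values_has_sup s pm) _ _.
by left; exists g.
Qed.

Lemma maxPM_ge0 m s : pointmeasure m -> 0 <= maxPM m s.
Proof. by move=> pm; apply: sup_upper_bound (atom_values_has_sup s pm) _ _; right. Qed.

Lemma le_maxPM m1 m2 s : pointmeasure m2 -> atoms m1 `<=` atoms m2 ->
  maxPM m1 s <= maxPM m2 s.
Proof.
move=> pm2 sub; apply: ge_sup; first by exists 0; right.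
by move=> y [[g /sub m2g <-] | ->]; [apply: maxPM_ub | apply: maxPM_ge0].
Qed.

Lemma maxPM_attained m s : pointmeasure m -> 0 < maxPM m s ->
  exists2 g, atoms m g & g s = maxPM m s.
Proof.
move=> pm M0; have M20 : 0 < maxPM m s / 2 by rewrite divr_gt0.
have M2M : maxPM m s / 2 < maxPM m s by rewrite ltr_pdivrMr // ltr_pMr // ltr1n.
have [x xub [xE | [g mg gx]]] := atom_values_bounded s pm M20.
- have : maxPM m s <= x by apply: ge_sup => //; exists 0; right.
  by rewrite xE => /(lt_le_trans M2M); rewrite ltxx.
- exists g => //; apply/eqP; rewrite eq_le maxPM_ub //= gx.
  by apply: ge_sup => //; exists 0; right.
Qed.

End point_measure_max.

Section extremal_decomposition.
Context {R : realType} {T : pseudoMetricType R}.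
Variables (K : set T) (m : (T -> R) -> nat).
Hypothesis pm : pointmeasure m.

Let diff (m' : (T -> R) -> nat) f := (m f - m' f)%N.
Let E := extremalK K (maxPM m) m.

Lemma atoms_extremalK g f :
  atoms (extremalK K g m) f <-> atoms m f /\ ~ ltK K f g.
Proof.
by rewrite /atoms /extremalK /=; case: asboolP => //; split=> // [[]].
Qed.

Lemma atoms_extremalK_sub : atoms E `<=` atoms m.
Proof. by move=> f /atoms_extremalK[]. Qed.

Lemma pointmeasure_extremalK : pointmeasure E.
Proof. exact: pointmeasureS pm atoms_extremalK_sub. Qed.

Lemma maxPM_extremalK s : K s -> maxPM E s = maxPM m s.
Proof.
move=> Ks; apply/eqP; rewrite eq_le (le_maxPM s pm atoms_extremalK_sub) /=.
have [M0 | M0] := leP (maxPM m s) 0.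
  exact/(le_trans M0)/maxPM_ge0/pointmeasure_extremalK.
have [g mg gs] := maxPM_attained pm M0.
have Eg : atoms E g.
  by apply/atoms_extremalK; split=> // /(_ s Ks); rewrite gs ltxx.
by rewrite -gs; apply: maxPM_ub Eg; apply: pointmeasure_extremalK.
Qed.

Lemma extremalK_decomposition :
  subPM E m /\ CKplus K E /\ CKminus K (maxPM E) (diff E).
Proof.
have pmE := pointmeasure_extremalK.
have pmD : pointmeasure (diff E).
  apply: pointmeasureS pm _ => f; rewrite /atoms /= => /leq_trans; apply.
  exact: leq_subr.
have maxE f := ltK_eq f maxPM_extremalK.
split; [|split; split=> // f].
- by split=> //; split=> // f; rewrite /E /extremalK; case: asboolP.
- by move=> /atoms_extremalK[_ nfK] /maxE.
- rewrite /atoms /diff /E /extremalK /=; case: asboolP => [_|fK].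
    by rewrite subnn.
  by move=> _; apply/maxE; apply: contrapT fK.
Qed.

Lemma extremalK_unique m' : subPM m' m -> CKplus K m' ->
  CKminus K (maxPM m') (diff m') -> m' = extremalK K (maxPM m) m.
Proof.
move=> [pm' [le_m'm _]] [_ m'plus] [_ diff_lt].
have maxK : forall s, K s -> maxPM m' s = maxPM m s.
  move=> s Ks; apply/eqP; rewrite eq_le le_maxPM //=; last first.
    by move=> f; rewrite /atoms /= => /leq_trans; apply.
  apply: ge_sup; first by exists 0; right.
  move=> y [[g mg <-] | ->]; last exact: maxPM_ge0.
  have [m'g | ] := ltnP 0 (m' g); first exact: maxPM_ub.
  rewrite leqn0 => /eqP m'g0; apply/ltW/diff_lt => //.
  by rewrite /atoms /diff /= m'g0 subn0.
apply: funext => f; rewrite /extremalK; case: asboolP => [fK | /contrapT fK].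
  apply/eqP; rewrite eqn_leq le_m'm /= -subn_eq0 -leqn0 leqNgt.
  by apply/negP => /diff_lt /(ltK_eq f maxK); apply: fK.
apply/eqP; rewrite -leqn0 leqNgt; apply/negP => /m'plus; apply.
exact/(ltK_eq f maxK).
Qed.

End extremal_decomposition.

Theorem lemma1 (R : realType) (T : pseudoMetricType R)
  (d : measure_display) (Omega : measurableType d) (P : probability Omega R)
  (eta : Omega -> T -> R) (mu : set (T -> R) -> \bar R)
  (Phi : Omega -> (T -> R) -> nat) (K : set T) :
  hausdorff_space T -> compact [set: T] ->
  (forall w, continuous (eta w)) ->
  (forall t, measurable_fun setT (fun w => eta w t)) ->
  max_inf_div P eta ->
  (forall t, vertex P eta t = 0%E) ->
  exponent_measure P eta mu ->
  poisson_rm P Phi mu ->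
  (forall w, eta w = maxPM (Phi w)) ->
  closed K ->
  forall (w : Omega) (Phit : (T -> R) -> nat),
    (subPM Phit (Phi w) /\ CKplus K Phit /\
     CKminus K (maxPM Phit) (fun f => Phi w f - Phit f)%N)
    <-> Phit = extremalK K (eta w) (Phi w).
Proof.
move=> _ _ _ _ _ _ _ [pmPhi _] etaE _ w Phit; rewrite etaE.
split=> [[sub [plus minus]] | ->].
- exact: (@extremalK_unique _ _ K _ (pmPhi w) Phit sub plus minus).
- exact: extremalK_decomposition (pmPhi w).
Qed.
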